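(* Let $k>0$, $\mu>0$ and define, for a second-rank tensor $\mathbf A$ on $\mathbb{R}^3$ with $\det\mathbf A>0$, $$\rho_{\mathrm R}\psi_{\mathrm{el}}(\mathbf A):=\frac{k}{2}\Big(\ln\sqrt{\det\mathbf A}\Big)^2+\frac{\mu}{2}\Big(\operatorname{tr}\big((\det\mathbf A)^{-1/3}\mathbf A\big)-3\Big).$$ Let $M$ be the set of symmetric positive definite second-rank tensors $\mathbf B$ on $\mathbb{R}^3$ with $\det\mathbf B=1$, and for $\mathbf C^{(1)},\mathbf C^{(2)}\in M$ define $\mathrm{Dist}(\mathbf C^{(1)},\mathbf C^{(2)}):=\sqrt{\rho_{\mathrm R}\psi_{\mathrm{el}}\big(\mathbf C^{(1)}(\mathbf C^{(2)})^{-1}\big)}$. Then: (i) for every second-rank tensor $\mathbf F_0$ with $\det\mathbf F_0=1$ and all $\mathbf C^{(1)},\mathbf C^{(2)}\in M$, $\mathrm{Dist}\big(\mathbf F_0^{-\mathrm T}\mathbf C^{(1)}\mathbf F_0^{-1},\mathbf F_0^{-\mathrm T}\mathbf C^{(2)}\mathbf F_0^{-1}\big)=\mathrm{Dist}(\mathbf C^{(1)},\mathbf C^{(2)})$; (ii) for all $\mathbf C^{(1)},\mathbf C^{(2)}\in M$ one has $\mathrm{Dist}(\mathbf C^{(1)},\mathbf C^{(2)})\ge 0$, and $\mathrm{Dist}(\mathbf C^{(1)},\mathbf C^{(2)})=0$ if and only if $\mathbf C^{(1)}=\mathbf C^{(2)}$.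
   Context: $\mathbf A^{-\mathrm T}$ denotes the inverse of the transpose. $\rho_{\mathrm R}\psi_{\mathrm{el}}$ is the (generalized Neo-Hooke) free energy density written as a single function; $\rho_{\mathrm R}>0$ is a constant mass density. *)

From HB Require Import structures.
From mathcomp Require Import all_boot all_order all_algebra.
From mathcomp Require Import all_classical all_reals all_analysis.
Set Implicit Arguments. Unset Strict Implicit. Unset Printing Implicit Defensive.
Import Order.TTheory GRing.Theory Num.Theory.
Local Open Scope ring_scope.

Definition psi_el (R : realType) (k mu : R) (A : 'M[R]_3) : R :=
  k / 2 * (ln (Num.sqrt (\det A))) ^+ 2
  + mu / 2 * (\tr (powR (\det A) (- (3%:R^-1)) *: A) - 3%:R).

Definition spd (R : realType) (B : 'M[R]_3) : Prop :=
  B^T = B /\ (forall v : 'rV[R]_3, v != 0 -> 0 < (v *m B *m v^T) 0 0).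

Definition inM (R : realType) (B : 'M[R]_3) : Prop := spd B /\ \det B = 1.

Definition Dist (R : realType) (k mu : R) (C1 C2 : 'M[R]_3) : R :=
  Num.sqrt (psi_el k mu (C1 *m invmx C2)).

(* On M the matrix X = C1 C2^-1 has determinant 1, so the logarithmic term of
   psi_el vanishes and Dist C1 C2 = sqrt (mu/2 (tr X - 3)).  Trace and determinant are similarity invariants, and the F0-action
   replaces X by the similar matrix F0^-T X F0^T, which gives (i).
   For (ii), pick P with P^T C2 P = 1; then X is similar to S = P^T C1 P, which
   is positive definite with det S = 1.  In the factorisation S = L D L^T with L
   unit lower triangular, each diagonal entry of S is the matching pivot of D
   plus a sum of squares, so by AM-GM tr S >= tr D >= 3 (det D = 1), and
   tr S = 3 forces L = D = 1, i.e. C1 = C2. *)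

From mathcomp Require Import all_boot all_order all_algebra.
From mathcomp Require Import all_classical all_reals all_analysis.
From mathcomp Require Import ring lra.
Import Order.TTheory GRing.Theory Num.Theory.
Local Open Scope ring_scope.
Set Implicit Arguments. Unset Strict Implicit.

Lemma AGM_prod1_eq1 (R : numFieldType) (I : finType) (E : I -> R) :
  (forall i, 0 <= E i) -> \prod_i E i = 1 -> \sum_i E i <= #|I|%:R ->
  forall i, E i = 1.
Proof.
move=> E_ge0 prodE1 sumE_le i.
have n_gt0 : (0 < #|I|)%N by apply/card_gt0P; exists i.
have [AGM_le AGM_eq] := @leif_AGM R I predT E (fun j _ => E_ge0 j).
set mu := _ / _ in AGM_le AGM_eq.
have mu_le1 : mu <= 1 by rewrite ler_pdivrMr ?mul1r // ltr0n.
have mu_ge0 : 0 <= mu by rewrite divr_ge0 ?sumr_ge0.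
have := @exprn_ile1 _ #|I| _ mu_ge0 mu_le1.
rewrite le_eqVlt => /orP[/eqP mun1|]; last first.
  by move=> /(le_lt_trans AGM_le); rewrite prodE1 ltxx.
move: AGM_eq; rewrite prodE1 mun1 eqxx => /esym/forall_inP/(_ i isT)/forall_inP eqE.
have : E i ^+ #|I| = 1.
  by rewrite -prodE1 -prodr_const; apply: eq_bigr => j _; rewrite (eqP (eqE j isT)).
by move/eqP; rewrite pexpr_eq1 // => /eqP.
Qed.

Lemma invmx_eq (R : comUnitRingType) n (A B : 'M[R]_n) :
  A *m B = 1%:M -> invmx A = B.
Proof.
by move=> AB1; have [uA _] := mulmx1_unit AB1; rewrite -[RHS](mulKmx uA) AB1 mulmx1.
Qed.

Lemma invmx_mul (R : comUnitRingType) n (A B : 'M[R]_n) :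
  A \in unitmx -> B \in unitmx -> invmx (A *m B) = invmx B *m invmx A.
Proof.
move=> uA uB; apply: invmx_eq.
by rewrite mulmxA (mulmxK uB) (mulmxV uA).
Qed.

Lemma sym_mxE (T : Type) n (C : 'M[T]_n) i j : C^T = C -> C j i = C i j.
Proof. by move=> symC; rewrite -[in RHS]symC mxE. Qed.

Lemma congr_eq1E (R : comUnitRingType) n (C P : 'M[R]_n) :
  P \in unitmx -> P^T *m C *m P = 1%:M -> C = invmx P^T *m invmx P.
Proof.
move=> uP PCP; have uPt : P^T \in unitmx by rewrite unitmx_tr.
have -> : C = invmx P^T *m (P^T *m C *m P) *m invmx P.
  by rewrite !mulmxA mulVmx // mul1mx mulmxK.
by rewrite PCP mulmx1.
Qed.

Lemma congr_mul_invmx (R : comUnitRingType) n (G C1 C2 : 'M[R]_n) :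
  G \in unitmx -> C2 \in unitmx ->
  (G^T *m C1 *m G) *m invmx (G^T *m C2 *m G) = G^T *m (C1 *m invmx C2) *m invmx G^T.
Proof.
move=> uG uC2; have uGt : G^T \in unitmx by rewrite unitmx_tr.
by rewrite !invmx_mul ?unitmx_mul ?uGt ?uC2 // !mulmxA mulmxK.
Qed.

Lemma congr_diag_eq1 (R : rcfType) n (C W : 'M[R]_n) (p : 'rV[R]_n) :
  W \in unitmx -> W^T *m C *m W = diag_mx p -> (forall i, 0 < p 0 i) ->
  exists2 P, P \in unitmx & P^T *m C *m P = 1%:M.
Proof.
move=> uW WCW p_gt0; set s := \row_i (Num.sqrt (p 0 i))^-1.
have s_neq0 i : s 0 i != 0 by rewrite mxE invr_eq0 lt0r_neq0 // sqrtr_gt0.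
exists (W *m diag_mx s).
  by rewrite unitmx_mul uW unitmxE unitfE det_diag; apply/prodf_neq0 => i _.
rewrite trmx_mul tr_diag_mx !mulmxA -(mulmxA _ W^T) -(mulmxA _ _ W) WCW.
rewrite !mulmx_diag -diag_const_mx; congr diag_mx; apply/rowP => i.
rewrite !mxE mulrAC -expr2 exprVn sqr_sqrtr ?ltW //.
by rewrite mulVf // lt0r_neq0.
Qed.

Definition i0 : 'I_3 := @Ordinal 3 0 isT.
Definition i1 : 'I_3 := @Ordinal 3 1 isT.
Definition i2 : 'I_3 := @Ordinal 3 2 isT.

Lemma ord3P (i : 'I_3) : [\/ i = i0, i = i1 | i = i2].
Proof.
by case: i => [[|[|[|//]]] ?]; [constructor 1|constructor 2|constructor 3];
  apply: val_inj.
Qed.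

Lemma big_ord3 (R : Type) (idx : R) (op : Monoid.law idx) (F : 'I_3 -> R) :
  \big[op/idx]_(i < 3) F i = op (op (F i0) (F i1)) (F i2).
Proof.
rewrite !big_ord_recr big_ord0 /= Monoid.mul1m.
by congr (op (op (F _) (F _)) (F _)); apply: val_inj.
Qed.

Lemma matrix3P (T : Type) (A B : 'M[T]_3) :
  A i0 i0 = B i0 i0 -> A i0 i1 = B i0 i1 -> A i0 i2 = B i0 i2 ->
  A i1 i0 = B i1 i0 -> A i1 i1 = B i1 i1 -> A i1 i2 = B i1 i2 ->
  A i2 i0 = B i2 i0 -> A i2 i1 = B i2 i1 -> A i2 i2 = B i2 i2 -> A = B.
Proof.
move=> *; apply/matrixP => i j.
by case: (ord3P i) => ->; case: (ord3P j) => ->.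
Qed.

Section LDL.

Variable F : fieldType.
Implicit Types C : 'M[F]_3.

Definition minor2 C := C i0 i0 * C i1 i1 - C i0 i1 ^+ 2.

Definition ldl_mx C : 'M[F]_3 :=
  \matrix_(i, j) nth 0 (nth [::]
   [:: [:: 1; - (C i0 i1 / C i0 i0);
         (C i0 i1 * C i1 i2 - C i1 i1 * C i0 i2) / minor2 C];
       [:: 0; 1; (C i0 i1 * C i0 i2 - C i0 i0 * C i1 i2) / minor2 C];
       [:: 0; 0; 1]] i) j.

Definition ldl_pivots C : 'rV[F]_3 := \row_j nth 0
  [:: C i0 i0; minor2 C / C i0 i0;
      C i2 i2 + (C i0 i2 * (C i0 i1 * C i1 i2 - C i1 i1 * C i0 i2)
        + C i1 i2 * (C i0 i1 * C i0 i2 - C i0 i0 * C i1 i2)) / minor2 C] j.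

Lemma det_ldl_mx C : \det (ldl_mx C) = 1.
Proof.
rewrite -det_tr det_trig; last first.
  apply/is_trig_mxP => i j.
  by case: (ord3P i) => ->; case: (ord3P j) => ->; rewrite !mxE.
by rewrite big_ord3 !mxE /= !mul1r.
Qed.

Lemma ldl_mx_unit C : ldl_mx C \in unitmx.
Proof. by rewrite unitmxE det_ldl_mx unitr1. Qed.

(* Needs no assumption on [minor2 C]: this is how [minor2 C > 0] is obtained
   for positive definite [C] before [ldl_congr] applies. *)
Lemma ldl_congr_entry11 C : C^T = C -> C i0 i0 != 0 ->
  ((ldl_mx C)^T *m C *m ldl_mx C) i1 i1 = minor2 C / C i0 i0.
Proof.
move=> symC a_neq0; rewrite /minor2 !mxE !big_ord3 !mxE !big_ord3 !mxE /=.
by rewrite (sym_mxE i0 i1 symC); field.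
Qed.

Lemma ldl_congr C : C^T = C -> C i0 i0 != 0 -> minor2 C != 0 ->
  (ldl_mx C)^T *m C *m ldl_mx C = diag_mx (ldl_pivots C).
Proof.
move=> symC a_neq0; rewrite /minor2 => m_neq0; apply: matrix3P;
  rewrite !mxE !big_ord3 !mxE !big_ord3 !mxE /= /minor2;
  rewrite (sym_mxE i0 i1 symC) (sym_mxE i0 i2 symC) (sym_mxE i1 i2 symC);
  by field; rewrite ?a_neq0 ?m_neq0.
Qed.

Lemma det_ldl C : C^T = C -> C i0 i0 != 0 -> minor2 C != 0 ->
  \det C = \prod_i ldl_pivots C 0 i.
Proof.
move=> symC a_neq0 m_neq0; rewrite -det_diag -ldl_congr //.
by rewrite !det_mulmx det_tr det_ldl_mx mul1r mulr1.
Qed.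

Lemma ldl_diag_pivots C : C^T = C -> C i0 i0 != 0 -> minor2 C != 0 ->
  [/\ C i0 i0 = ldl_pivots C 0 i0,
      C i1 i1 = ldl_pivots C 0 i1 + C i0 i1 ^+ 2 / C i0 i0
    & C i2 i2 = ldl_pivots C 0 i2 + C i0 i2 ^+ 2 / C i0 i0
        + (C i0 i0 * C i1 i2 - C i0 i1 * C i0 i2) ^+ 2 / (C i0 i0 * minor2 C)].
Proof.
move=> symC a_neq0 m_neq0; rewrite !mxE /=.
by split; rewrite /minor2 in m_neq0 *; field; rewrite ?a_neq0 ?m_neq0.
Qed.

End LDL.

Section SPD.

Variable R : realType.
Implicit Types C P S : 'M[R]_3.

Lemma spd_congr C P : spd C -> P \in unitmx -> spd (P^T *m C *m P).
Proof.
move=> [symC posC] uP; split; first by rewrite !trmx_mul trmxK symC mulmxA.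
have uPt : P^T \in unitmx by rewrite unitmx_tr.
move=> v v_neq0; have vP_neq0 : v *m P^T != 0.
  by apply: contraNneq v_neq0 => vP0; rewrite -(mulmxK uPt v) vP0 mul0mx.
by have := posC _ vP_neq0; rewrite trmx_mul trmxK !mulmxA.
Qed.

Lemma spd_diag_gt0 C i : spd C -> 0 < C i i.
Proof.
move=> [_ posC]; have ei_neq0 : 'e_i != 0 :> 'rV[R]_3.
  by apply/negP => /eqP/rowP/(_ i); rewrite !mxE !eqxx => /eqP; rewrite oner_eq0.
by have := posC _ ei_neq0; rewrite -rowE trmx_delta -colE /col /row => /[!mxE].
Qed.

Lemma spd_minor2_gt0 C : spd C -> 0 < minor2 C.
Proof.
move=> spdC; have a_gt0 := spd_diag_gt0 i0 spdC.
have := spd_diag_gt0 i1 (spd_congr spdC (ldl_mx_unit C)).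
by rewrite ldl_congr_entry11 ?spdC.1 ?lt0r_neq0 // pmulr_lgt0 ?invr_gt0.
Qed.

Lemma spd_ldl_pivots_gt0 C i : spd C -> 0 < ldl_pivots C 0 i.
Proof.
move=> spdC; have a_neq0 := lt0r_neq0 (spd_diag_gt0 i0 spdC).
have m_neq0 := lt0r_neq0 (spd_minor2_gt0 spdC).
have := spd_diag_gt0 i (spd_congr spdC (ldl_mx_unit C)).
by rewrite ldl_congr ?spdC.1 // mxE eqxx mulr1n.
Qed.

Lemma spd_det1_tr_le3 S : spd S -> \det S = 1 -> \tr S <= 3%:R -> S = 1%:M.
Proof.
move=> spdS detS trS; have symS := spdS.1.
have a_gt0 := spd_diag_gt0 i0 spdS; have m_gt0 := spd_minor2_gt0 spdS.
have [a_neq0 m_neq0] := (lt0r_neq0 a_gt0, lt0r_neq0 m_gt0).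
have [Sa Sb Sc] := ldl_diag_pivots symS a_neq0 m_neq0.
have p_gt0 i := spd_ldl_pivots_gt0 i spdS.
have prod_p := det_ldl symS a_neq0 m_neq0.
set p := ldl_pivots S in Sa Sb Sc p_gt0 prod_p.
set d := S i0 i1 in Sb Sc; set e := S i0 i2 in Sc; set f := S i1 i2 in Sc.
have t1_ge0 : 0 <= d ^+ 2 / S i0 i0 by rewrite divr_ge0 ?sqr_ge0 ?ltW.
have t2_ge0 : 0 <= e ^+ 2 / S i0 i0 by rewrite divr_ge0 ?sqr_ge0 ?ltW.
have t3_ge0 : 0 <= (S i0 i0 * f - d * e) ^+ 2 / (S i0 i0 * minor2 S).
  by rewrite divr_ge0 ?sqr_ge0 ?ltW ?mulr_gt0.
have trS_eq : \tr S = \sum_i p 0 i + (d ^+ 2 / S i0 i0 + e ^+ 2 / S i0 i0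
    + (S i0 i0 * f - d * e) ^+ 2 / (S i0 i0 * minor2 S)).
  by rewrite /mxtrace !big_ord3 /= {1}Sa Sb Sc; ring.
have p1 : forall i, p 0 i = 1.
  apply: AGM_prod1_eq1 => [i||]; [exact: ltW | by rewrite -prod_p |].
  by rewrite card_ord; lra.
move: trS_eq trS; rewrite big_ord3 /= !p1 => -> trS.
have sqr_div_eq0 (x y : R) : y != 0 -> x ^+ 2 / y = 0 -> x = 0.
  by move=> y_neq0 /eqP; rewrite mulf_eq0 invr_eq0 sqrf_eq0 (negbTE y_neq0) orbF => /eqP.
have d0 : d = 0 by apply: sqr_div_eq0 a_neq0 _; lra.
have e0 : e = 0 by apply: sqr_div_eq0 a_neq0 _; lra.
have f0 : f = 0.
  have : S i0 i0 * f - d * e = 0.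
    by apply: sqr_div_eq0 (mulf_neq0 a_neq0 m_neq0) _; lra.
  by rewrite d0 mul0r subr0 => /eqP; rewrite mulf_eq0 (negbTE a_neq0) => /eqP.
apply: matrix3P; rewrite !mxE /= ?(sym_mxE i0 i1 symS, sym_mxE i0 i2 symS, sym_mxE i1 i2 symS);
  by rewrite -/d -/e -/f ?Sa ?Sb ?Sc ?p1 ?d0 ?e0 ?f0 ?(mul0r, mulr0, subr0) ?expr0n /= ?(mul0r, addr0).
Qed.

Lemma spd_congr_eq1 C : spd C -> exists2 P, P \in unitmx & P^T *m C *m P = 1%:M.
Proof.
move=> spdC; have a_neq0 := lt0r_neq0 (spd_diag_gt0 i0 spdC).
have m_neq0 := lt0r_neq0 (spd_minor2_gt0 spdC).
apply: congr_diag_eq1 (ldl_mx_unit C) (ldl_congr spdC.1 a_neq0 m_neq0) _.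
by move=> i; apply: spd_ldl_pivots_gt0.
Qed.

Lemma tr_mul_invmx_le3_eq C1 C2 : inM C1 -> inM C2 ->
  \tr (C1 *m invmx C2) <= 3%:R -> C1 = C2.
Proof.
move=> [spdC1 detC1] [spdC2 detC2] trle3.
have [P uP PC2P] := spd_congr_eq1 spdC2.
have uPt : P^T \in unitmx by rewrite unitmx_tr.
have invC2 : invmx C2 = P *m P^T.
  by rewrite (congr_eq1E uP PC2P) invmx_mul ?unitmx_inv // !invmxK.
have detP2 : \det P ^+ 2 = 1.
  by have := congr1 determinant PC2P; rewrite !det_mulmx det_tr detC2 det1 mulr1 -expr2.
suff PC1P : P^T *m C1 *m P = 1%:M by rewrite (congr_eq1E uP PC1P) -(congr_eq1E uP PC2P).
apply: spd_det1_tr_le3; first exact: spd_congr.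
  by rewrite !det_mulmx det_tr detC1 mulr1 -expr2.
by rewrite mxtrace_mulC mulmxA -invC2 mxtrace_mulC.
Qed.

End SPD.

Lemma psi_el_det1 (R : realType) (k mu : R) (X : 'M[R]_3) : \det X = 1 ->
  psi_el k mu X = mu / 2 * (\tr X - 3%:R).
Proof.
by move=> detX; rewrite /psi_el detX sqrtr1 ln1 powR1 scale1r expr0n mulr0 add0r.
Qed.

Lemma psi_el_similar (R : realType) (k mu : R) (P A : 'M[R]_3) :
  P \in unitmx -> psi_el k mu (P *m A *m invmx P) = psi_el k mu A.
Proof.
move=> uP; have detPA : \det (P *m A *m invmx P) = \det A.
  by rewrite !det_mulmx det_inv mulrAC mulfV ?mul1r // -unitfE -unitmxE.
by rewrite /psi_el detPA !mxtraceZ mxtrace_mulC mulmxA mulVmx ?mul1mx.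
Qed.

Theorem mainTheorem2 (R : realType) (k mu : R) (hk : 0 < k) (hmu : 0 < mu) :
  (forall (F0 C1 C2 : 'M[R]_3), \det F0 = 1 -> inM C1 -> inM C2 ->
     Dist k mu ((invmx F0)^T *m C1 *m invmx F0) ((invmx F0)^T *m C2 *m invmx F0)
     = Dist k mu C1 C2)
  /\
  (forall (C1 C2 : 'M[R]_3), inM C1 -> inM C2 ->
     0 <= Dist k mu C1 C2 /\ (Dist k mu C1 C2 = 0 <-> C1 = C2)).
Proof.
have inM_unit C : inM C -> C \in unitmx by case=> _ detC; rewrite unitmxE detC unitr1.
split=> [F0 C1 C2 detF0 _ /inM_unit uC2 | C1 C2 inC1 inC2].
  have uG : invmx F0 \in unitmx by rewrite unitmx_inv unitmxE detF0 unitr1.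
  by rewrite /Dist congr_mul_invmx ?psi_el_similar ?unitmx_tr.
split; first exact: sqrtr_ge0.
have detX : \det (C1 *m invmx C2) = 1.
  by rewrite det_mulmx det_inv inC1.2 inC2.2 invr1 mulr1.
rewrite /Dist; split=> [/eqP | <-].
  rewrite sqrtr_eq0 psi_el_det1 // pmulr_rle0 ?divr_gt0 // subr_le0.
  exact: tr_mul_invmx_le3_eq.
by rewrite mulmxV ?inM_unit // psi_el_det1 ?det1 // mxtrace1 subrr mulr0 sqrtr0.
Qed.
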